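(* Let $\mathbb{E}$ be a regular category, $\Sigma$ a fibrational class of split epimorphisms, and suppose $\mathbb{E}$ is a $\Sigma$-Mal'tsev category. Let $R$ be a reflexive relation and $S$ a symmetric $\Sigma$-relation on an object $X$. Then $R$ and $S$ permute: $R\circ S=S\circ R$.
   Context: A split epimorphism is a pair $(f,s)$ with $fs=1$. A class $\Sigma$ of split epimorphisms is fibrational if it contains all split epimorphisms $(f,s)$ with $f$ invertible and is stable under pullback along any morphism. A pair of morphisms with common codomain $Z$ is jointly extremally epic if it factors jointly through no non-invertible monomorphism into $Z$. $\mathbb{E}$ is $\Sigma$-Mal'tsev if for every split epimorphism $(f,s)\colon X\rightleftarrows Y$ in $\Sigma$ and every split epimorphism $(g,t)$ with $g\colon Y'\to Y$, letting $X'=Y'\times_YX$, $s'=(1_{Y'},sg)$, $\bar t=(tf,1_X)$, the pair $(s',\bar t)$ is jointly extremally epic. A $\Sigma$-relation on $X$ is a reflexive relation $(d_0,d_1)\colon S\rightarrowtail X\times X$ with reflexivity $s_0$ such that $(d_0,s_0)\in\Sigma$. In a regular category, for relations $R$ on $X$ and $S$ on $X$, the composite $R\circ S$ is the image of the morphism $(d_0^R\pi_0,d_1^S\pi_1)\colon T\to X\times X$, where $T$ is the pullback of $d_0^S$ along $d_1^R$ with projections $\pi_0\colon T\to R$, $\pi_1\colon T\to S$ (so in set-theoretic terms $x(R\circ S)z$ iff $xRySz$ for some $y$). *)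

Set Implicit Arguments.
Unset Strict Implicit.

Record Category := {
  Ob :> Type;
  Hom : Ob -> Ob -> Type;
  idm : forall a, Hom a a;
  comp : forall a b c, Hom b c -> Hom a b -> Hom a c;
  comp_assoc : forall a b c d (h : Hom c d) (g : Hom b c) (f : Hom a b),
      comp h (comp g f) = comp (comp h g) f;
  comp_id_l : forall a b (f : Hom a b), comp (idm b) f = f;
  comp_id_r : forall a b (f : Hom a b), comp f (idm a) = f
}.

Arguments Hom : clear implicits.
Arguments idm {c} a : rename.
Arguments comp {c a b c0} _ _ : rename.
Notation "g \o f" := (comp g f) (at level 40, left associativity).

Section Basic.
Variable C : Category.

Definition is_mono {a b : C} (m : Hom C a b) : Prop :=
  forall z (x y : Hom C z a), m \o x = m \o y -> x = y.

Definition is_iso {a b : C} (f : Hom C a b) : Prop :=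
  exists g : Hom C b a, g \o f = idm a /\ f \o g = idm b.

Definition jointly_monic {r a b : C} (d0 : Hom C r a) (d1 : Hom C r b) : Prop :=
  forall z (x y : Hom C z r), d0 \o x = d0 \o y -> d1 \o x = d1 \o y -> x = y.

Definition is_pullback {A B Z P : C} (f : Hom C A Z) (g : Hom C B Z)
    (pA : Hom C P A) (pB : Hom C P B) : Prop :=
  f \o pA = g \o pB /\
  forall Q (qA : Hom C Q A) (qB : Hom C Q B), f \o qA = g \o qB ->
    exists u : Hom C Q P, (pA \o u = qA /\ pB \o u = qB) /\
      forall v : Hom C Q P, pA \o v = qA -> pB \o v = qB -> v = u.

Definition is_terminal (t : C) : Prop :=
  forall a, exists f : Hom C a t, forall g : Hom C a t, g = f.

Definition is_coequalizer {A B Q : C} (f g : Hom C A B) (q : Hom C B Q) : Prop :=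
  q \o f = q \o g /\
  forall Z (h : Hom C B Z), h \o f = h \o g ->
    exists u : Hom C Q Z, u \o q = h /\ forall v : Hom C Q Z, v \o q = h -> v = u.

Definition is_regular_epi {B Q : C} (q : Hom C B Q) : Prop :=
  exists A (f g : Hom C A B), is_coequalizer f g q.

Definition regular : Prop :=
  (exists t : C, is_terminal t) /\
  (forall A B Z (f : Hom C A Z) (g : Hom C B Z),
      exists P (pA : Hom C P A) (pB : Hom C P B), is_pullback f g pA pB) /\
  (forall A B (f : Hom C A B) P (p1 p2 : Hom C P A), is_pullback f f p1 p2 ->
      exists Q (q : Hom C A Q), is_coequalizer p1 p2 q) /\
  (forall A B Z (e : Hom C A Z) (g : Hom C B Z) P (pA : Hom C P A) (pB : Hom C P B),
      is_regular_epi e -> is_pullback e g pA pB -> is_regular_epi pB).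

Definition splitclass := forall A B : C, Hom C A B -> Hom C B A -> Prop.

Definition is_split_epi {A B : C} (f : Hom C A B) (s : Hom C B A) : Prop :=
  f \o s = idm B.

Definition fibrational (Sig : splitclass) : Prop :=
  (forall A B (f : Hom C A B) s, Sig A B f s -> is_split_epi f s) /\
  (forall A B (f : Hom C A B) s, is_split_epi f s -> is_iso f -> Sig A B f s) /\
  (forall X Y (f : Hom C X Y) (s : Hom C Y X), Sig X Y f s ->
   forall Y' (g : Hom C Y' Y) X' (f' : Hom C X' Y') (gbar : Hom C X' X),
     is_pullback g f f' gbar ->
     forall s' : Hom C Y' X', f' \o s' = idm Y' -> gbar \o s' = s \o g ->
       Sig X' Y' f' s').

Definition jointly_extremally_epic {A B Z : C} (u : Hom C A Z) (v : Hom C B Z) : Prop :=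
  forall M (m : Hom C M Z) (a : Hom C A M) (b : Hom C B M),
    is_mono m -> m \o a = u -> m \o b = v -> is_iso m.

Definition Sigma_Maltsev (Sig : splitclass) : Prop :=
  forall X Y (f : Hom C X Y) (s : Hom C Y X), Sig X Y f s ->
  forall Y' (g : Hom C Y' Y) (t : Hom C Y Y'), g \o t = idm Y ->
  forall X' (f' : Hom C X' Y') (gbar : Hom C X' X), is_pullback g f f' gbar ->
  forall (s' : Hom C Y' X') (tbar : Hom C X X'),
    f' \o s' = idm Y' -> gbar \o s' = s \o g ->
    f' \o tbar = t \o f -> gbar \o tbar = idm X ->
    jointly_extremally_epic s' tbar.

(** Relations on X: jointly monic pairs (d0, d1) : S -> X
    (i.e. monomorphisms (d0,d1) : S >-> X x X). *)
Record relation (X : C) := {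
  rel_ob : C;
  rd0 : Hom C rel_ob X;
  rd1 : Hom C rel_ob X;
  rel_jm : jointly_monic rd0 rd1
}.

Definition reflexive {X : C} (R : relation X) : Prop :=
  exists s0 : Hom C X (rel_ob R), rd0 R \o s0 = idm X /\ rd1 R \o s0 = idm X.

Definition symmetric {X : C} (R : relation X) : Prop :=
  exists sg : Hom C (rel_ob R) (rel_ob R), rd0 R \o sg = rd1 R /\ rd1 R \o sg = rd0 R.

Definition Sigma_relation (Sig : splitclass) {X : C} (R : relation X) : Prop :=
  exists s0 : Hom C X (rel_ob R),
    rd0 R \o s0 = idm X /\ rd1 R \o s0 = idm X /\ Sig _ _ (rd0 R) s0.

(** [K] is (a representative of) the composite relation R o S:
    for some pullback T of d0^S along d1^R with projections pi0 : T -> R, pi1 : T -> S,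
    K is the image of (d0^R pi0, d1^S pi1) : T -> X x X, i.e. there is a regular
    epimorphism e : T -> K with (d0^K, d1^K) e = (d0^R pi0, d1^S pi1). *)
Definition is_composite {X : C} (R S K : relation X) : Prop :=
  exists T (pi0 : Hom C T (rel_ob R)) (pi1 : Hom C T (rel_ob S)),
    is_pullback (rd1 R) (rd0 S) pi0 pi1 /\
    exists e : Hom C T (rel_ob K),
      is_regular_epi e /\ rd0 K \o e = rd0 R \o pi0 /\ rd1 K \o e = rd1 S \o pi1.

(** Equality of relations as subobjects of X x X. *)
Definition same_relation {X : C} (K L : relation X) : Prop :=
  exists phi : Hom C (rel_ob K) (rel_ob L),
    is_iso phi /\ rd0 L \o phi = rd0 K /\ rd1 L \o phi = rd1 K.

End Basic.


(* Write T = R ×_X S for the object of R∘S-witnesses x R y S z.  The pullback of the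
   split epimorphism (d0^S, s0) ∈ Σ along d1^R, split by the reflexivity r0 of R, is T,
   so the Σ-Mal'tsev condition makes the sections (1, s0 d1^R) : R -> T and
   (r0 d0^S, 1) : S -> T jointly extremally epic.  Both composites into X × X land in
   S∘R (as R ≤ S∘R and S ≤ S∘R by reflexivity), hence so does T, and therefore its
   regular image R∘S: thus R∘S ≤ S∘R.  For symmetric S the opposite relation S° is again
   a Σ-relation (pull (d0^S, s0) back along the identity through the symmetry), and the
   same inclusion for R° and S° gives S∘R ≤ R∘S. *)

Set Implicit Arguments.
Unset Strict Implicit.

Section Relations.
Variable C : Category.

Lemma comp_retraction_l {a b c : C} (f : Hom C b a) (g : Hom C a b) (h : Hom C c a) :
  f \o g = idm a -> f \o (g \o h) = h.
Proof. intro Hfg. rewrite comp_assoc, Hfg, comp_id_l. reflexivity. Qed.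

Lemma is_pullback_sym {A B Z P : C} (f : Hom C A Z) (g : Hom C B Z)
    (pA : Hom C P A) (pB : Hom C P B) :
  is_pullback f g pA pB -> is_pullback g f pB pA.
Proof.
  intros [Hsq Huniv]. split; [symmetry; exact Hsq|].
  intros Q qB qA Hq. destruct (Huniv Q qA qB (eq_sym Hq)) as [u [[Hu1 Hu2] Huniq]].
  exists u. split; [split; assumption|]. intros v Hv1 Hv2. apply Huniq; assumption.
Qed.

Lemma is_pullback_idm_iso {B Y P : C} (g : Hom C B Y) (phi : Hom C P B) :
  is_iso phi -> is_pullback (idm Y) g (g \o phi) phi.
Proof.
  intros [psi [Hpsi Hphi]]. split; [apply comp_id_l|].
  intros Q qA qB Hq. exists (psi \o qB). split; [split|].
  - rewrite <- comp_assoc, comp_retraction_l by exact Hphi.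
    rewrite <- Hq, comp_id_l. reflexivity.
  - apply comp_retraction_l. exact Hphi.
  - intros v _ Hv. rewrite <- Hv. symmetry. apply comp_retraction_l. exact Hpsi.
Qed.

Lemma pullback_mono {A B Z P : C} (f : Hom C A Z) (g : Hom C B Z)
    (pA : Hom C P A) (pB : Hom C P B) :
  is_pullback f g pA pB -> is_mono g -> is_mono pA.
Proof.
  intros [Hsq Huniv] Hg W x y Hxy.
  assert (HB : pB \o x = pB \o y).
  { apply Hg. rewrite !comp_assoc, <- Hsq, <- !comp_assoc, Hxy. reflexivity. }
  assert (Hx : f \o (pA \o x) = g \o (pB \o x)) by now rewrite !comp_assoc, Hsq.
  destruct (Huniv W _ _ Hx) as [u [_ Hu]].
  rewrite (Hu x eq_refl eq_refl), (Hu y (eq_sym Hxy) (eq_sym HB)). reflexivity.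
Qed.

Lemma regular_epi_epi {B Q : C} (q : Hom C B Q) : is_regular_epi q ->
  forall Z (x y : Hom C Q Z), x \o q = y \o q -> x = y.
Proof.
  intros [A [f [g [Hcoeq Huniv]]]] Z x y Hxy.
  assert (Hxq : (x \o q) \o f = (x \o q) \o g).
  { rewrite <- !comp_assoc, Hcoeq. reflexivity. }
  destruct (Huniv Z (x \o q) Hxq) as [w [_ Hw]].
  rewrite (Hw x eq_refl), (Hw y (eq_sym Hxy)). reflexivity.
Qed.

Definition is_product {A B P : C} (p1 : Hom C P A) (p2 : Hom C P B) : Prop :=
  forall Q (a : Hom C Q A) (b : Hom C Q B), exists u : Hom C Q P,
    (p1 \o u = a /\ p2 \o u = b) /\
    forall v, p1 \o v = a -> p2 \o v = b -> v = u.

Lemma regular_products : regular C ->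
  forall A B : C, exists P (p1 : Hom C P A) (p2 : Hom C P B), is_product p1 p2.
Proof.
  intros [[t Ht] [Hpb _]] A B.
  destruct (Ht A) as [tA _]. destruct (Ht B) as [tB _].
  destruct (Hpb _ _ _ tA tB) as [P [p1 [p2 [_ Huniv]]]].
  exists P, p1, p2. intros Q a b. apply Huniv.
  destruct (Ht Q) as [tQ HtQ]. rewrite (HtQ (tA \o a)), (HtQ (tB \o b)). reflexivity.
Qed.

Lemma is_product_jointly_monic {A B P : C} (p1 : Hom C P A) (p2 : Hom C P B) :
  is_product p1 p2 -> jointly_monic p1 p2.
Proof.
  intros Hprod Z x y H1 H2.
  destruct (Hprod Z (p1 \o x) (p2 \o x)) as [u [_ Hu]].
  rewrite (Hu x eq_refl eq_refl), (Hu y (eq_sym H1) (eq_sym H2)). reflexivity.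
Qed.

Lemma pairing_mono {A B P K : C} (p1 : Hom C P A) (p2 : Hom C P B)
    (d0 : Hom C K A) (d1 : Hom C K B) (c : Hom C K P) :
  jointly_monic d0 d1 ->
  p1 \o c = d0 -> p2 \o c = d1 -> is_mono c.
Proof.
  intros Hjm H1 H2 Z x y Hxy. apply Hjm.
  - rewrite <- H1, <- !comp_assoc, Hxy. reflexivity.
  - rewrite <- H2, <- !comp_assoc, Hxy. reflexivity.
Qed.

Definition factors_through {X T : C} (K : relation X) (p q : Hom C T X) : Prop :=
  exists h : Hom C T (rel_ob K), rd0 K \o h = p /\ rd1 K \o h = q.

Definition rel_le {X : C} (K L : relation X) : Prop := factors_through L (rd0 K) (rd1 K).

Lemma factors_through_regular_epi {X T A : C} (K : relation X) (p q : Hom C A X)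
    (e : Hom C T A) :
  is_regular_epi e -> factors_through K (p \o e) (q \o e) -> factors_through K p q.
Proof.
  intros He [h [H0 H1]].
  pose proof (regular_epi_epi He) as Hepi.
  destruct He as [W [f [g [Hcoeq Huniv]]]].
  assert (Hhf : h \o f = h \o g).
  { apply rel_jm; rewrite !comp_assoc; [rewrite H0 | rewrite H1];
      rewrite <- !comp_assoc, Hcoeq; reflexivity. }
  destruct (Huniv _ h Hhf) as [phi [Hphi _]].
  exists phi. split; apply Hepi; rewrite <- comp_assoc, Hphi; assumption.
Qed.

(* The image of a jointly extremally epic pair of generalized elements of T controls T:
   the pullback of K along the pairing T -> X × X is a subobject of T containing both. *)
Lemma factors_through_jointly_extremally_epic {X T Y1 Y2 : C} :
  regular C -> forall (K : relation X) (p q : Hom C T X)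
    (u : Hom C Y1 T) (v : Hom C Y2 T),
  jointly_extremally_epic u v ->
  factors_through K (p \o u) (q \o u) -> factors_through K (p \o v) (q \o v) ->
  factors_through K p q.
Proof.
  intros HC K p q u v Hext Hu Hv.
  destruct (regular_products HC X X) as [P [p1 [p2 Hprod]]].
  destruct (Hprod T p q) as [cT [[HcT1 HcT2] _]].
  destruct (Hprod _ (rd0 K) (rd1 K)) as [cK [[HcK1 HcK2] _]].
  destruct HC as [_ [Hpb _]].
  destruct (Hpb _ _ _ cT cK) as [M [mT [mK HM]]].
  assert (HmT : is_mono mT).
  { apply (pullback_mono HM). exact (pairing_mono (@rel_jm _ _ K) HcK1 HcK2). }
  assert (Hlift : forall Z (w : Hom C Z T),
             factors_through K (p \o w) (q \o w) -> exists w', mT \o w' = w).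
  { intros Z w [h [H0 H1]].
    assert (Hw : cT \o w = cK \o h).
    { apply (is_product_jointly_monic Hprod); rewrite !comp_assoc;
        [rewrite HcT1, HcK1 | rewrite HcT2, HcK2]; symmetry; assumption. }
    destruct HM as [_ Huniv]. destruct (Huniv Z w h Hw) as [w' [[Hw' _] _]].
    exists w'. exact Hw'. }
  destruct (Hlift _ u Hu) as [u' Hu']. destruct (Hlift _ v Hv) as [v' Hv'].
  destruct (Hext M mT u' v' HmT Hu' Hv') as [n [_ Hn]].
  destruct HM as [Hsq _].
  exists (mK \o n). split.
  - rewrite <- HcK1, <- comp_assoc, (comp_assoc cK), <- Hsq.
    rewrite <- !comp_assoc, Hn, comp_id_r. exact HcT1.
  - rewrite <- HcK2, <- comp_assoc, (comp_assoc cK), <- Hsq.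
    rewrite <- !comp_assoc, Hn, comp_id_r. exact HcT2.
Qed.

Lemma rel_le_antisym {X : C} (K L : relation X) :
  rel_le K L -> rel_le L K -> same_relation K L.
Proof.
  intros [phi [A0 A1]] [psi [B0 B1]]. exists phi. split; [|split; assumption].
  exists psi. split; apply rel_jm; rewrite comp_assoc, ?comp_id_r.
  - rewrite B0, A0. reflexivity.
  - rewrite B1, A1. reflexivity.
  - rewrite A0, B0. reflexivity.
  - rewrite A1, B1. reflexivity.
Qed.

Lemma rel_le_composite_l {X : C} (R S SR : relation X) :
  reflexive S -> is_composite S R SR -> rel_le R SR.
Proof.
  intros [s0 [Hs0 Hs1]] [T [rho0 [rho1 [[_ Huniv] [e [_ [He0 He1]]]]]]].
  assert (Hsec : rd1 S \o (s0 \o rd0 R) = rd0 R \o idm _).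
  { rewrite comp_id_r. apply comp_retraction_l. exact Hs1. }
  destruct (Huniv _ _ _ Hsec) as [w [[Hw0 Hw1] _]].
  exists (e \o w). rewrite !comp_assoc, He0, He1, <- !comp_assoc, Hw0, Hw1.
  rewrite comp_id_r, comp_retraction_l by exact Hs0. split; reflexivity.
Qed.

Lemma rel_le_composite_r {X : C} (R S SR : relation X) :
  reflexive R -> is_composite S R SR -> rel_le S SR.
Proof.
  intros [r0 [Hr0 Hr1]] [T [rho0 [rho1 [[_ Huniv] [e [_ [He0 He1]]]]]]].
  assert (Hsec : rd1 S \o idm _ = rd0 R \o (r0 \o rd1 S)).
  { rewrite comp_id_r, comp_retraction_l by exact Hr0. reflexivity. }
  destruct (Huniv _ _ _ Hsec) as [w [[Hw0 Hw1] _]].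
  exists (e \o w). rewrite !comp_assoc, He0, He1, <- !comp_assoc, Hw0, Hw1.
  rewrite comp_id_r, comp_retraction_l by exact Hr1. split; reflexivity.
Qed.

Lemma Sigma_relation_reflexive (Sig : splitclass C) {X : C} (S : relation X) :
  Sigma_relation Sig S -> reflexive S.
Proof. intros [s0 [Hs0 [Hs1 _]]]. exists s0. split; assumption. Qed.

Lemma composite_le_swap (Sig : splitclass C) :
  regular C -> Sigma_Maltsev Sig ->
  forall (X : C) (R S RS SR : relation X),
  reflexive R -> Sigma_relation Sig S ->
  is_composite R S RS -> is_composite S R SR -> rel_le RS SR.
Proof.
  intros HC HM X R S RS SR HR HS [T [pi0 [pi1 [HT [e [He [He0 He1]]]]]]] HSR.
  pose proof HR as [r0 [Hr0 Hr1]]. pose proof HS as [s0 [Hs0 [Hs1 HSig]]].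
  apply (factors_through_regular_epi (e := e) He). rewrite He0, He1.
  pose proof HT as [_ Huniv].
  assert (Hsec_R : rd1 R \o idm _ = rd0 S \o (s0 \o rd1 R)).
  { rewrite comp_id_r, comp_retraction_l by exact Hs0. reflexivity. }
  destruct (Huniv _ _ _ Hsec_R) as [sR [[HsR0 HsR1] _]].
  assert (Hsec_S : rd1 R \o (r0 \o rd0 S) = rd0 S \o idm _).
  { rewrite comp_id_r, comp_retraction_l by exact Hr1. reflexivity. }
  destruct (Huniv _ _ _ Hsec_S) as [sS [[HsS0 HsS1] _]].
  apply (factors_through_jointly_extremally_epic HC (u := sR) (v := sS)).
  - exact (HM _ _ _ _ HSig _ _ _ Hr1 _ _ _ HT _ _ HsR0 HsR1 HsS0 HsS1).
  - rewrite <- !comp_assoc, HsR0, HsR1, comp_id_r, comp_retraction_l by exact Hs1.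
    exact (rel_le_composite_l (Sigma_relation_reflexive HS) HSR).
  - rewrite <- !comp_assoc, HsS0, HsS1, comp_id_r, comp_retraction_l by exact Hr0.
    exact (rel_le_composite_r HR HSR).
Qed.

Lemma jointly_monic_sym {r a b : C} (d0 : Hom C r a) (d1 : Hom C r b) :
  jointly_monic d0 d1 -> jointly_monic d1 d0.
Proof. intros Hjm Z x y H1 H0. exact (Hjm Z x y H0 H1). Qed.

Definition rel_opp {X : C} (R : relation X) : relation X :=
  {| rel_ob := rel_ob R; rd0 := rd1 R; rd1 := rd0 R;
     rel_jm := jointly_monic_sym (@rel_jm _ _ R) |}.

Lemma reflexive_opp {X : C} (R : relation X) : reflexive R -> reflexive (rel_opp R).
Proof. intros [r0 [Hr0 Hr1]]. exists r0. split; assumption. Qed.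

Lemma rel_le_opp {X : C} (K L : relation X) :
  rel_le (rel_opp K) (rel_opp L) -> rel_le K L.
Proof. intros [h [H1 H0]]. exists h. split; assumption. Qed.

Lemma is_composite_opp {X : C} (R S K : relation X) :
  is_composite R S K -> is_composite (rel_opp S) (rel_opp R) (rel_opp K).
Proof.
  intros [T [pi0 [pi1 [HT [e [He [He0 He1]]]]]]].
  exists T, pi1, pi0. split; [exact (is_pullback_sym HT)|].
  exists e. split; [exact He | split; assumption].
Qed.

Lemma symmetry_involutive {X : C} (S : relation X) (sg : Hom C (rel_ob S) (rel_ob S)) :
  rd0 S \o sg = rd1 S -> rd1 S \o sg = rd0 S -> sg \o sg = idm (rel_ob S).
Proof.
  intros H0 H1. apply rel_jm; rewrite comp_assoc, comp_id_r.
  - rewrite H0, H1. reflexivity.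
  - rewrite H1, H0. reflexivity.
Qed.

(* (d1, s0) is the pullback of (d0, s0) along the identity, through the symmetry. *)
Lemma Sigma_relation_opp (Sig : splitclass C) {X : C} (S : relation X) :
  fibrational Sig -> symmetric S -> Sigma_relation Sig S ->
  Sigma_relation Sig (rel_opp S).
Proof.
  intros [_ [_ Hstable]] [sg [Hsg0 Hsg1]] [s0 [Hs0 [Hs1 HSig]]].
  pose proof (symmetry_involutive Hsg0 Hsg1) as Hinv.
  assert (Hsg_s0 : sg \o s0 = s0 \o idm X).
  { rewrite comp_id_r. apply rel_jm; rewrite comp_assoc.
    - rewrite Hsg0, Hs1, Hs0. reflexivity.
    - rewrite Hsg1, Hs1, Hs0. reflexivity. }
  assert (Hpb : is_pullback (idm X) (rd0 S) (rd0 S \o sg) sg).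
  { apply is_pullback_idm_iso. exists sg. split; exact Hinv. }
  assert (Hsplit : (rd0 S \o sg) \o s0 = idm X) by now rewrite Hsg0.
  exists s0. split; [exact Hs1 | split; [exact Hs0|]].
  simpl. rewrite <- Hsg0. exact (Hstable _ _ _ _ HSig _ _ _ _ _ Hpb _ Hsplit Hsg_s0).
Qed.

End Relations.

Theorem proposition2p6 (C : Category) (Sig : splitclass C) :
  regular C -> fibrational Sig -> Sigma_Maltsev Sig ->
  forall (X : C) (R S : relation X),
    reflexive R -> symmetric S -> Sigma_relation Sig S ->
    forall RS SR : relation X,
      is_composite R S RS -> is_composite S R SR ->
      same_relation RS SR.
Proof.
  intros HC Hfib HM X R S HR HSsym HS RS SR HRS HSR.
  apply rel_le_antisym.
  - exact (composite_le_swap HC HM HR HS HRS HSR).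
  - apply rel_le_opp.
    apply (composite_le_swap HC HM (R := rel_opp R) (S := rel_opp S)).
    + exact (reflexive_opp HR).
    + exact (Sigma_relation_opp Hfib HSsym HS).
    + exact (is_composite_opp HSR).
    + exact (is_composite_opp HRS).
Qed.
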